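(* Let $T$ and $A$ be closed Hermitian subspaces in $X^2$ and $S$ a self-adjoint subspace in $X^2$, with $D(T)=D(S)=:D\subset D(A)$ and $T=S+A$. Then $$A(0)\subset S(0)=T(0),$$ and, with $Q:A(0)^\perp\to S(0)^\perp$ the orthogonal projection, $$T_sx=S_sx+QA_sx\quad\text{for all }x\in D.$$
   Context: $X$ is a complex Hilbert space and $X^2=X\times X$ carries the inner product $\langle (x,f),(y,g)\rangle=\langle x,y\rangle+\langle f,g\rangle$. A subspace $T$ in $X^2$ means a linear subspace of $X^2$ (a linear relation); a linear operator in $X$ is identified with its graph. Notation: $D(T)=\{x:(x,f)\in T \text{ for some } f\}$, $T(x)=\{f:(x,f)\in T\}$. The adjoint is $T^*=\{(y,g)\in X^2:\langle g,x\rangle=\langle y,f\rangle \text{ for all }(x,f)\in T\}$; $T$ is Hermitian if $T\subset T^*$ and self-adjoint if $T=T^*$. For subspaces $S,A$ in $X^2$, $S+A=\{(x,f+g):(x,f)\in S,(x,g)\in A\}$. For a closed subspace $T$, set $T_\infty=\{(0,g)\in X^2:(0,g)\in T\}$ and $T_s=T\ominus T_\infty$ (orthogonal complement of $T_\infty$ in $T$), so $T=T_s\oplus T_\infty$; $T_s$ is the graph of a linear operator (the operator part of $T$) with $D(T_s)=D(T)$ and $R(T_s)\subset T(0)^\perp$. *)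

(* Complex Hilbert spaces modelled over a scalar field C that is an
   archimedean, Cauchy-complete, algebraically closed numeric field with conjugation
   (this characterises the complex numbers up to isomorphism). *)
From HB Require Import structures.
From mathcomp Require Import all_boot all_order all_algebra.
Set Implicit Arguments. Unset Strict Implicit. Unset Printing Implicit Defensive.
Import Order.TTheory GRing.Theory Num.Theory.
Local Open Scope ring_scope.

Section Hilbert.
Variable C : archiClosedFieldType.

Definition complete_scalars : Prop :=
  forall u : nat -> C,
    (forall e : C, 0 < e -> exists N, forall m n, (N <= m)%N -> (N <= n)%N -> `|u m - u n| < e) ->
    exists l : C, forall e : C, 0 < e -> exists N, forall n, (N <= n)%N -> `|u n - l| < e.

Variable X : lmodType C.

Definition ip_cauchy (ip : X -> X -> C) (u : nat -> X) : Prop :=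
  forall e : C, 0 < e -> exists N, forall m n, (N <= m)%N -> (N <= n)%N ->
    ip (u m - u n) (u m - u n) < e.

Definition ip_converges (ip : X -> X -> C) (u : nat -> X) (l : X) : Prop :=
  forall e : C, 0 < e -> exists N, forall n, (N <= n)%N -> ip (u n - l) (u n - l) < e.

Definition is_hilbert (ip : X -> X -> C) : Prop :=
  [/\ forall (a : C) (x y z : X), ip (a *: x + y) z = a * ip x z + ip y z,
      forall x y : X, ip x y = (ip y x)^*,
      forall x : X, 0 <= ip x x,
      forall x : X, ip x x = 0 -> x = 0
    & forall u : nat -> X, ip_cauchy ip u -> exists l, ip_converges ip u l].

Definition ip2 (ip : X -> X -> C) (p q : X * X) : C := ip p.1 q.1 + ip p.2 q.2.

Definition linrel := X * X -> Prop.

Definition is_subspace (T : linrel) : Prop :=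
  [/\ T (0, 0),
      forall p q, T p -> T q -> T (p.1 + q.1, p.2 + q.2)
    & forall (a : C) p, T p -> T (a *: p.1, a *: p.2)].

Definition is_closed (ip : X -> X -> C) (T : linrel) : Prop :=
  forall (u : nat -> X * X) (l : X * X), (forall n, T (u n)) ->
    (forall e : C, 0 < e -> exists N, forall n, (N <= n)%N ->
        ip2 ip ((u n).1 - l.1, (u n).2 - l.2) ((u n).1 - l.1, (u n).2 - l.2) < e) ->
    T l.

Definition dom (T : linrel) (x : X) : Prop := exists f, T (x, f).
Definition img (T : linrel) (x : X) (f : X) : Prop := T (x, f).   (* f \in T(x) *)

Definition adjoint (ip : X -> X -> C) (T : linrel) : linrel :=
  fun q => forall p, T p -> ip q.2 p.1 = ip q.1 p.2.

Definition is_hermitian (ip : X -> X -> C) (T : linrel) : Prop := forall p, T p -> adjoint ip T p.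
Definition is_selfadjoint (ip : X -> X -> C) (T : linrel) : Prop := forall p, T p <-> adjoint ip T p.

Definition rsum (S A : linrel) : linrel :=
  fun p => exists f g, S (p.1, f) /\ A (p.1, g) /\ p.2 = f + g.

(* T_infinity and T_s = T (-) T_infinity *)
Definition rinf (T : linrel) : linrel := fun p => p.1 = 0 /\ T p.
Definition rs (ip : X -> X -> C) (T : linrel) : linrel :=
  fun p => T p /\ forall q, rinf T q -> ip2 ip p q = 0.

Definition perp (ip : X -> X -> C) (M : X -> Prop) : X -> Prop := fun y => forall m, M m -> ip m y = 0.

Definition is_proj (ip : X -> X -> C) (M : X -> Prop) (h k : X) : Prop :=
  M k /\ forall m, M m -> ip (h - k) m = 0.

End Hilbert.

From HB Require Import structures.
From mathcomp Require Import all_boot all_order all_algebra.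
Import Order.TTheory GRing.Theory Num.Theory.
Local Open Scope ring_scope.

(* For g in A(0), (0, g) lies in the Hermitian T, so g is orthogonal to D(T) = D(S), which
   puts (0, g) in S* = S; hence A(0) is in S(0) and T(0) = S(0) + A(0) = S(0).  For x in D,
   writing T_s x = f1 + h1 with (x, f1) in S and (x, h1) in A, the vector T_s x - S_s x
   differs from A_s x by an element of S(0) and is orthogonal to S(0) = T(0), so it is the
   projection of A_s x onto S(0)^perp, which is unique. *)

Section InnerProduct.
Context {C : archiClosedFieldType} {X : lmodType C} {ip : X -> X -> C}.
Hypothesis HX : is_hilbert ip.

Lemma ipBl x y z : ip (x - y) z = ip x z - ip y z.
Proof.
case: HX => ipZDl _ _ _ _.
by rewrite addrC -scaleN1r ipZDl mulN1r addrC.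
Qed.

Lemma ip0l z : ip 0 z = 0.
Proof. by rewrite -(subrr z) ipBl subrr. Qed.

Lemma ip_conj x y : ip x y = (ip y x)^*.
Proof. by case: HX. Qed.

Lemma ip0r z : ip z 0 = 0.
Proof. by rewrite ip_conj ip0l rmorph0. Qed.

Lemma ipBr x y z : ip z (x - y) = ip z x - ip z y.
Proof. by rewrite ip_conj ipBl rmorphB [ip z x]ip_conj [ip z y]ip_conj. Qed.

Lemma ip_eq0C x y : ip x y = 0 -> ip y x = 0.
Proof. by move=> xy0; rewrite ip_conj xy0 rmorph0. Qed.

Lemma perpB {N : X -> Prop} {x y} :
  perp ip N x -> perp ip N y -> perp ip N (x - y).
Proof. by move=> Nx Ny m Nm; rewrite ipBr Nx // Ny // subr0. Qed.

Lemma is_proj_perp_uniq {N : X -> Prop} {h k1 k2} :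
  is_proj ip (perp ip N) h k1 -> is_proj ip (perp ip N) h k2 -> k1 = k2.
Proof.
move=> [Nk1 hk1] [Nk2 hk2]; apply/eqP; rewrite -subr_eq0; apply/eqP.
have Nk12 := perpB Nk1 Nk2.
have k12_def : k1 - k2 = (h - k2) - (h - k1).
  by rewrite opprB [RHS]addrC addrA subrK.
case: HX => _ _ _ ip_def _; apply: ip_def.
by rewrite {1}k12_def ipBl hk1 // hk2 // subr0.
Qed.

End InnerProduct.

Section LinearRelations.
Context {C : archiClosedFieldType} {X : lmodType C} {T : linrel X}.
Hypothesis HT : is_subspace T.

Lemma subspaceD {x f y g} : T (x, f) -> T (y, g) -> T (x + y, f + g).
Proof. by case: HT => _ TD _ Tf Tg; apply: (TD (x, f) (y, g)). Qed.

Lemma subspaceB {x f y g} : T (x, f) -> T (y, g) -> T (x - y, f - g).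
Proof.
case: HT => _ _ TZ Tf Tg; apply: subspaceD => //.
by have := TZ (-1) (y, g) Tg; rewrite /= !scaleN1r.
Qed.

Lemma img0B {x f g} : T (x, f) -> T (x, g) -> img T 0 (f - g).
Proof. by move=> Tf Tg; rewrite /img -(subrr x); apply: subspaceB. Qed.

Lemma img0D {f g} : img T 0 f -> img T 0 g -> img T 0 (f + g).
Proof. by move=> Tf Tg; rewrite /img -(addr0 0); apply: subspaceD. Qed.

End LinearRelations.

Section Adjoints.
Context {C : archiClosedFieldType} {X : lmodType C} {ip : X -> X -> C}.
Hypothesis HX : is_hilbert ip.

Lemma hermitian_img0_orth {T : linrel X} {g x} :
  is_hermitian ip T -> img T 0 g -> dom T x -> ip g x = 0.
Proof. by move=> HT Tg [f Tf]; rewrite (HT _ Tg (x, f) Tf) (ip0l HX). Qed.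

Lemma selfadjoint_img0 {S : linrel X} {g} :
  is_selfadjoint ip S -> (forall x, dom S x -> ip g x = 0) -> img S 0 g.
Proof.
move=> HS gD; apply/HS => -[x f] Sf /=.
by rewrite (ip0l HX); apply: gD; exists f.
Qed.

Lemma rs_perp_img0 {T : linrel X} {x f} : rs ip T (x, f) -> perp ip (img T 0) f.
Proof.
move=> [_ f_orth] m Tm; apply: (ip_eq0C HX).
by have := f_orth (0, m) (conj erefl Tm); rewrite /ip2 /= (ip0r HX) add0r.
Qed.

End Adjoints.

Theorem theorem3p2 (C : archiClosedFieldType) (HC : complete_scalars C)
  (X : lmodType C) (ip : X -> X -> C) (HX : is_hilbert ip)
  (T S A : linrel X)
  (HTsub : is_subspace T) (HAsub : is_subspace A) (HSsub : is_subspace S)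
  (HTcl : is_closed ip T) (HAcl : is_closed ip A)
  (HTh : is_hermitian ip T) (HAh : is_hermitian ip A) (HSsa : is_selfadjoint ip S)
  (HDTS : forall x, dom T x <-> dom S x)
  (HDA : forall x, dom S x -> dom A x)
  (HTSA : forall p, T p <-> rsum S A p) :
  (forall g, img A 0 g -> img S 0 g) /\
  (forall g, img S 0 g <-> img T 0 g) /\
  (forall x, dom T x -> forall f g h k : X,
     rs ip T (x, f) -> rs ip S (x, g) -> rs ip A (x, h) ->
     is_proj ip (perp ip (img S 0)) h k ->
     f = g + k).
Proof.
have S00 : S (0, 0) by case: HSsub.
have A00 : A (0, 0) by case: HAsub.
have A0S0 : forall g, img A 0 g -> img S 0 g.
  move=> g Ag; apply: (selfadjoint_img0 HX HSsa) => x /HDTS Tx.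
  apply: (hermitian_img0_orth HX HTh _ Tx).
  by apply/HTSA; exists 0, g; rewrite add0r.
have S0T0 : forall g, img S 0 g <-> img T 0 g.
  move=> g; split=> [Sg | /HTSA [f1 [g1 /= [Sf1 [Ag1 ->]]]]].
    by apply/HTSA; exists g, 0; rewrite addr0.
  exact: (img0D HSsub Sf1 (A0S0 g1 Ag1)).
split=> //; split=> // x _ f g h k Tf Sg [Ah _] Pk.
have f_perp : perp ip (img S 0) f :=
  fun m Sm => rs_perp_img0 HX Tf m (proj1 (S0T0 m) Sm).
have /HTSA [f1 [h1 /= [Sf1 [Ah1 f_def]]]] := proj1 Tf.
have Pfg : is_proj ip (perp ip (img S 0)) h (f - g).
  split; first exact: (perpB HX f_perp (rs_perp_img0 HX Sg)).
  have -> : h - (f - g) = (g - f1) + (h - h1).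
    by rewrite f_def [RHS]addrACA -opprD opprB addrA [h + g]addrC.
  move=> m perp_m; apply: perp_m.
  exact: (img0D HSsub (img0B HSsub (proj1 Sg) Sf1) (A0S0 _ (img0B HAsub Ah Ah1))).
by rewrite (is_proj_perp_uniq HX Pk Pfg) addrC subrK.
Qed.
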